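(* Let $T>0$ and let $g:[0,T]\to\mathbb R$ be a right-continuous nondecreasing function such that $g(t)-g(t-)\le\frac12$ for all $t\in(0,T]$. Then the Kurzweil integral equation $$y(t)=1+\int_0^t y(\tau)\,\mathrm dg(\tau)\quad\forall t\in[0,T]$$ has a unique nondecreasing right-continuous solution $y:[0,T]\to[1,\infty)$, and $y(t)\le \mathrm e^{2(g(T)-g(0))}$ for all $t\in[0,T]$.
   Context: The integral is the Kurzweil integral: $J=\int_a^b f(t)\,\mathrm dg(t)$ if for every $\varepsilon>0$ there is a gauge $\delta:[a,b]\to(0,\infty)$ such that $|J-\sum_{j=1}^m f(\tau_j)(g(t_j)-g(t_{j-1}))|<\varepsilon$ for every partition $a=t_0<\dots<t_m=b$, $\tau_j\in[t_{j-1},t_j]$, with $[t_{j-1},t_j]\subset(\tau_j-\delta(\tau_j),\tau_j+\delta(\tau_j))$ for all $j$, $t_{j-1}<\tau_j$ for $j\ge2$, and $\tau_j<t_j$ for $j\le m-1$. $g(t-)$ denotes the left limit. *)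

From Stdlib Require Import Reals Lra.
Open Scope R_scope.

Fixpoint rs_sum (f g : R -> R) (t tau : nat -> R) (m : nat) : R :=
  match m with
  | O => 0
  | S k => rs_sum f g t tau k + f (tau (S k)) * (g (t (S k)) - g (t k))
  end.

Definition fine_partition (delta : R -> R) (a b : R)
    (m : nat) (t tau : nat -> R) : Prop :=
  t O = a /\ t m = b /\
  (forall j, (1 <= j <= m)%nat ->
     t (j - 1)%nat < t j /\
     t (j - 1)%nat <= tau j <= t j /\
     tau j - delta (tau j) < t (j - 1)%nat /\
     t j < tau j + delta (tau j) /\
     ((2 <= j)%nat -> t (j - 1)%nat < tau j) /\
     ((j <= m - 1)%nat -> tau j < t j)).

Definition KInt (f g : R -> R) (a b J : R) : Prop :=
  forall eps, 0 < eps ->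
  exists delta : R -> R,
    (forall x, a <= x <= b -> 0 < delta x) /\
    forall (m : nat) (t tau : nat -> R),
      fine_partition delta a b m t tau ->
      Rabs (J - rs_sum f g t tau m) < eps.

Definition nondecr_on (T : R) (h : R -> R) : Prop :=
  forall s t, 0 <= s -> s <= t -> t <= T -> h s <= h t.

Definition rcont_on (T : R) (h : R -> R) : Prop :=
  forall t, 0 <= t < T -> forall eps, 0 < eps ->
    exists d, 0 < d /\ forall s, t <= s < t + d -> s <= T -> Rabs (h s - h t) < eps.

Definition left_lim (h : R -> R) (t L : R) : Prop :=
  forall eps, 0 < eps ->
    exists d, 0 < d /\ forall s, t - d < s < t -> Rabs (h s - L) < eps.

Definition is_solution (T : R) (g y : R -> R) : Prop :=
  (forall t, 0 <= t <= T -> 1 <= y t) /\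
  nondecr_on T y /\ rcont_on T y /\
  (forall t, 0 <= t <= T -> exists J, KInt y g 0 t J /\ y t = 1 + J).

(* The solution is the product integral y(t) = Prod_[0,t] (1 - dg)^-1: the
   Kurzweil sums may evaluate y at the right end point of the last interval,
   so at a jump y(τ) - y(τ-) = y(τ) Δg(τ), i.e. y(τ) = y(τ-) / (1 - Δg(τ)).  It is
   realised as the infimum, over chains 0 = x_0 <= ... <= x_n = t with steps
   a_i = g(x_i+1) - g(x_i) <= 2/3, of Prod (1 - a_i)^-1.  Since
   (1 - a)^-1 (1 - b)^-1 <= (1 - a - b)^-1, this infimum Y(u, v) is multiplicative
   in the interval, and the bounds 1 + Δg <= Y(u, v) <= (1 - Δg)^-1 on short
   intervals, together with Y(u, τ) >= (1 - (g(τ) - g(τ-)))^-1, give the local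
   increment estimates that make y a solution.  The exponential bound comes from
   (1 - a)^-1 <= e^(2a) for a <= 2/3.
   The difference w of two solutions is bounded and solves w = int w dg; it
   vanishes by real induction: where w first fails to vanish the jump of g is at
   most 1/2, whence |w| <= 3/4 |w| there, and just beyond an interval where
   w = 0 right continuity of g halves every bound of |w|. *)

From Stdlib Require Import Reals Lra Lia List Classical ClassicalEpsilon IndefiniteDescription.
Open Scope R_scope.

Lemma Rabs_le_0 x : Rabs x <= 0 -> x = 0.
Proof.
  intros H. pose proof (Rle_abs x). pose proof (Rle_abs (- x)). rewrite Rabs_Ropp in *. lra.
Qed.

Lemma lub_approx E s : is_lub E s -> forall e, 0 < e -> exists x, E x /\ s - e < x <= s.
Proof.
  intros [Hub Hlub] e He. apply NNPP. intros Hnone.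
  enough (s <= s - e) by lra.
  apply Hlub. intros x Hx. apply Rnot_lt_le. intros Hlt.
  apply Hnone. exists x. split; [|split]; auto.
Qed.

Section FinePartition.

Context {δ : R -> R} {a b : R} {m : nat} {t τ : nat -> R}.
Hypothesis Hf : fine_partition δ a b m t τ.

Lemma fine_partition_le j k : (j <= k <= m)%nat -> t j <= t k.
Proof.
  destruct Hf as (_ & _ & Hstep). intros [Hjk Hkm].
  induction Hjk as [|k Hjk IH]; [lra|].
  destruct (Hstep (S k) ltac:(lia)) as [Hlt _].
  replace (S k - 1)%nat with k in Hlt by lia.
  specialize (IH ltac:(lia)). lra.
Qed.

Lemma fine_partition_lt j k : (j < k <= m)%nat -> t j < t k.
Proof.
  intros Hjk. destruct Hf as (_ & _ & Hstep).
  destruct (Hstep k ltac:(lia)) as [Hlt _].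
  pose proof (fine_partition_le j (k - 1) ltac:(lia)). lra.
Qed.

Lemma fine_partition_range j : (j <= m)%nat -> a <= t j <= b.
Proof.
  intros Hj. destruct Hf as (H0 & Hm & _). rewrite <- H0, <- Hm.
  split; apply fine_partition_le; lia.
Qed.

Lemma fine_partition_tag j : (1 <= j <= m)%nat -> a <= τ j <= b.
Proof.
  intros Hj. destruct Hf as (_ & _ & Hstep). destruct (Hstep j Hj) as (_ & Hτ & _).
  pose proof (fine_partition_range (j - 1) ltac:(lia)).
  pose proof (fine_partition_range j ltac:(lia)). lra.
Qed.

End FinePartition.

Lemma fine_partition_gauge_le δ δ' a b m t τ :
  (forall x, δ x <= δ' x) -> fine_partition δ a b m t τ -> fine_partition δ' a b m t τ.
Proof.
  intros Hδ (H0 & Hm & Hstep). split; [|split]; auto.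
  intros j Hj. specialize (Hδ (τ j)).
  destruct (Hstep j Hj) as (A1 & A2 & A3 & A4 & A5 & A6). repeat split; auto; lra.
Qed.

(* [τ m < x] is what [fine_partition] demands of every tag but the last, so
   that further intervals may be appended. *)
Definition extendable_partition (δ : R -> R) (a x : R) : Prop :=
  exists m t τ, (1 <= m)%nat /\ fine_partition δ a x m t τ /\ τ m < x.

Lemma extendable_partition_start δ a b :
  a < b -> 0 < δ a -> extendable_partition δ a (Rmin b (a + δ a / 2)).
Proof.
  intros Hab Hδ. set (x := Rmin b (a + δ a / 2)).
  assert (a < x) by (apply Rmin_glb_lt; lra).
  assert (x <= a + δ a / 2) by apply Rmin_r.
  exists 1%nat, (fun k => match k with O => a | _ => x end), (fun _ => a).
  split; [lia|split; [|lra]].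
  split; [reflexivity|split; [reflexivity|]].
  intros j Hj. replace j with 1%nat by lia. simpl.
  repeat split; try lra; lia.
Qed.

Lemma extendable_partition_stretch δ a x :
  extendable_partition δ a x ->
  exists e, 0 < e /\ forall y, x <= y < x + e -> extendable_partition δ a y.
Proof.
  intros (m & t & τ & Hm & (H0 & Hx & Hstep) & Hlast).
  destruct (Hstep m ltac:(lia)) as (A1 & A2 & A3 & A4 & A5 & _).
  exists (τ m + δ (τ m) - x). split; [lra|]. intros y Hy.
  exists m, (fun k => if Nat.eqb k m then y else t k), τ.
  split; [exact Hm|split; [|lra]].
  split; [destruct (Nat.eqb_spec 0 m); [lia|exact H0]|].
  split; [rewrite Nat.eqb_refl; reflexivity|].
  intros j Hj. rewrite (proj2 (Nat.eqb_neq (j - 1) m)) by lia.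
  destruct (Nat.eqb_spec j m) as [->|Hjm].
  - repeat split; auto; lra.
  - exact (Hstep j Hj).
Qed.

Lemma extendable_partition_snoc δ a x c y :
  extendable_partition δ a x -> x < c <= y -> c - δ c < x -> y < c + δ c ->
  exists m t τ, (1 <= m)%nat /\ fine_partition δ a y m t τ /\ τ m = c.
Proof.
  intros (m & t & τ & Hm & (H0 & Hx & Hstep) & Hlast) Hc Hlo Hhi.
  exists (S m), (fun k => if Nat.leb k m then t k else y),
         (fun k => if Nat.leb k m then τ k else c).
  rewrite (proj2 (Nat.leb_nle (S m) m)) by lia.
  split; [lia|split; [|reflexivity]].
  split; [exact H0|split].
  { cbv beta. rewrite (proj2 (Nat.leb_nle (S m) m)) by lia. reflexivity. }
  intros j Hj. rewrite (proj2 (Nat.leb_le (j - 1) m)) by lia.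
  destruct (Nat.leb_spec j m) as [Hjm|Hjm].
  - destruct (Hstep j ltac:(lia)) as (A1 & A2 & A3 & A4 & A5 & A6).
    repeat split; try lra; auto. intros _.
    destruct (Nat.eq_dec j m) as [->|Hne]; [lra|apply A6; lia].
  - replace j with (S m) by lia. replace (S m - 1)%nat with m by lia.
    rewrite Hx. repeat split; try lra. intros; lia.
Qed.

Lemma cousin δ a b : a < b -> (forall x, a <= x <= b -> 0 < δ x) ->
  exists m t τ, fine_partition δ a b m t τ.
Proof.
  intros Hab Hδ.
  set (Reach x := a < x <= b /\ extendable_partition δ a x).
  assert (HReach : Reach (Rmin b (a + δ a / 2))).
  { pose proof (Hδ a ltac:(lra)).
    split; [split; [apply Rmin_glb_lt; lra|apply Rmin_l]|].
    apply extendable_partition_start; lra. }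
  destruct (completeness Reach) as [s Hs].
  { exists b. intros x Hx. apply Hx. }
  { exists (Rmin b (a + δ a / 2)). exact HReach. }
  assert (Hsa : a < s).
  { pose proof (proj1 Hs _ HReach) as Hle. destruct HReach as [[Hlt _] _]. lra. }
  assert (Hsb : s <= b) by (apply Hs; intros x Hx; apply Hx).
  assert (Hδs : 0 < δ s) by (apply Hδ; lra).
  assert (Hbeyond : forall y, s < y <= b -> ~ extendable_partition δ a y).
  { intros y Hy Hext. assert (HRy : Reach y) by (split; [lra|exact Hext]).
    pose proof (proj1 Hs y HRy). lra. }
  destruct (classic (extendable_partition δ a s)) as [Hext|Hnext].
  - destruct (Req_dec s b) as [<-|Hne].
    + destruct Hext as (m & t & τ & _ & Hf & _). eauto.
    + exfalso. destruct (extendable_partition_stretch _ _ _ Hext) as [e [He Hy]].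
      set (y := Rmin b (s + e / 2)).
      assert (s < y) by (apply Rmin_glb_lt; lra).
      assert (y <= s + e / 2) by apply Rmin_r.
      apply (Hbeyond y); [split; [lra|apply Rmin_l]|apply Hy; lra].
  - destruct (lub_approx Reach s Hs (δ s) Hδs) as [x [[[Hax Hxb] Hx] Hxs]].
    assert (Hxs' : x < s) by (destruct Hxs as [_ [|<-]]; [lra|contradiction]).
    destruct (Req_dec s b) as [<-|Hne].
    + destruct (extendable_partition_snoc δ a x s s Hx) as (m & t & τ & _ & Hf & _);
        try lra.
      eauto.
    + exfalso. set (y := Rmin b (s + δ s / 2)).
      assert (s < y) by (apply Rmin_glb_lt; lra).
      assert (y <= s + δ s / 2) by apply Rmin_r.
      apply (Hbeyond y); [split; [lra|apply Rmin_l]|].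
      destruct (extendable_partition_snoc δ a x s y Hx) as (m & t & τ & Hm & Hf & Hτ);
        try lra.
      exists m, t, τ. split; [exact Hm|split; [exact Hf|lra]].
Qed.

Lemma rs_sum_sub f1 f2 g t τ m :
  rs_sum (fun x => f1 x - f2 x) g t τ m = rs_sum f1 g t τ m - rs_sum f2 g t τ m.
Proof. induction m as [|m IH]; simpl; [ring|rewrite IH; ring]. Qed.

Lemma rs_sum_eq0 f g t τ m :
  (forall j, (1 <= j <= m)%nat -> f (τ j) = 0) -> rs_sum f g t τ m = 0.
Proof.
  induction m as [|m IH]; intros Hf; simpl; [reflexivity|].
  rewrite IH by (intros; apply Hf; lia). rewrite (Hf (S m)) by lia. ring.
Qed.

Lemma rs_sum_telescope f F g t τ m e :
  (forall j, (1 <= j <= m)%nat ->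
     Rabs (F (t j) - F (t (j - 1)%nat) - f (τ j) * (g (t j) - g (t (j - 1)%nat)))
       <= e * (g (t j) - g (t (j - 1)%nat))) ->
  Rabs (F (t m) - F (t O) - rs_sum f g t τ m) <= e * (g (t m) - g (t O)).
Proof.
  induction m as [|m IH]; intros Hloc; simpl.
  - replace (F (t O) - F (t O) - 0) with 0 by ring. rewrite Rabs_R0. lra.
  - specialize (IH (fun j Hj => Hloc j ltac:(lia))).
    specialize (Hloc (S m) ltac:(lia)). replace (S m - 1)%nat with m in Hloc by lia.
    replace (F (t (S m)) - F (t O) - (rs_sum f g t τ m + f (τ (S m)) * (g (t (S m)) - g (t m))))
      with ((F (t m) - F (t O) - rs_sum f g t τ m)
            + (F (t (S m)) - F (t m) - f (τ (S m)) * (g (t (S m)) - g (t m)))) by ring.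
    eapply Rle_trans; [apply Rabs_triang|]. lra.
Qed.

Lemma rs_sum_abs_le f g δ a b m t τ c B :
  fine_partition δ a b m t τ ->
  (forall x y, a <= x -> x <= y -> y <= b -> g x <= g y) ->
  a <= c <= b -> 0 <= B ->
  (forall j, (1 <= j <= m)%nat -> Rabs (f (τ j)) <= B) ->
  (forall j, (1 <= j <= m)%nat -> t (j - 1)%nat < c -> f (τ j) = 0) ->
  Rabs (rs_sum f g t τ m) <= B * (g b - g c).
Proof.
  intros Hf Hg Hc HB Hbound Hzero.
  assert (Hinv : forall k, (k <= m)%nat ->
            Rabs (rs_sum f g t τ k) <= B * Rmax 0 (g (t k) - g c)).
  { induction k as [|k IH]; intros Hk; simpl.
    - rewrite Rabs_R0. apply Rmult_le_pos; [exact HB|apply Rmax_l].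
    - specialize (IH ltac:(lia)).
      pose proof (fine_partition_range Hf k ltac:(lia)).
      pose proof (fine_partition_range Hf (S k) ltac:(lia)).
      pose proof (fine_partition_le Hf k (S k) ltac:(lia)).
      assert (Hgk : g (t k) <= g (t (S k))) by (apply Hg; lra).
      destruct (Rlt_dec (t k) c) as [Hlt|Hge].
      + rewrite (Hzero (S k)) by (lia || (replace (S k - 1)%nat with k by lia; exact Hlt)).
        rewrite Rmax_left in IH by (assert (g (t k) <= g c) by (apply Hg; lra); lra).
        assert (0 <= B * Rmax 0 (g (t (S k)) - g c)) by (apply Rmult_le_pos; [lra|apply Rmax_l]).
        rewrite Rmult_0_l, Rplus_0_r. lra.
      + assert (g c <= g (t k)) by (apply Hg; lra).
        rewrite Rmax_right in IH |- * by lra.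
        pose proof (Hbound (S k) ltac:(lia)).
        eapply Rle_trans; [apply Rabs_triang|]. rewrite Rabs_mult, (Rabs_right (_ - _)) by lra.
        assert (Rabs (f (τ (S k))) * (g (t (S k)) - g (t k)) <= B * (g (t (S k)) - g (t k)))
          by (apply Rmult_le_compat_r; lra).
        lra. }
  destruct Hf as (_ & Hm & _). rewrite <- Hm.
  assert (Hcb : g c <= g b) by (apply Hg; lra).
  rewrite <- (Rmax_right 0 (g (t m) - g c)) by (rewrite Hm; lra).
  apply Hinv. lia.
Qed.

Lemma KInt_sub f1 f2 g a b J1 J2 :
  KInt f1 g a b J1 -> KInt f2 g a b J2 -> KInt (fun x => f1 x - f2 x) g a b (J1 - J2).
Proof.
  intros H1 H2 eps Heps.
  destruct (H1 (eps / 2) ltac:(lra)) as [δ1 [Hδ1 K1]].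
  destruct (H2 (eps / 2) ltac:(lra)) as [δ2 [Hδ2 K2]].
  exists (fun x => Rmin (δ1 x) (δ2 x)). split.
  - intros x Hx. apply Rmin_glb_lt; auto.
  - intros m t τ Hf. rewrite rs_sum_sub.
    pose proof (K1 m t τ (fine_partition_gauge_le _ _ _ _ _ _ _ (fun x => Rmin_l _ _) Hf)).
    pose proof (K2 m t τ (fine_partition_gauge_le _ _ _ _ _ _ _ (fun x => Rmin_r _ _) Hf)).
    replace (J1 - J2 - (rs_sum f1 g t τ m - rs_sum f2 g t τ m))
      with ((J1 - rs_sum f1 g t τ m) - (J2 - rs_sum f2 g t τ m)) by ring.
    eapply Rle_lt_trans; [apply Rabs_triang|]. rewrite Rabs_Ropp. lra.
Qed.

Lemma KInt_degenerate f g a J : KInt f g a a J -> J = 0.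
Proof.
  intros H. apply NNPP. intros HJ.
  destruct (H (Rabs J) (Rabs_pos_lt J HJ)) as [δ [_ K]].
  assert (Hf : fine_partition δ a a O (fun _ => a) (fun _ => a)).
  { split; [|split]; auto. intros j Hj. lia. }
  specialize (K O _ _ Hf). simpl in K. rewrite Rminus_0_r in K. lra.
Qed.

Lemma KInt_of_local_increments f F g a b : a <= b ->
  (forall u v, a <= u -> u <= v -> v <= b -> g u <= g v) ->
  (forall x, a <= x <= b -> forall ε, 0 < ε -> exists d, 0 < d /\
     forall u v, a <= u <= x -> x <= v <= b -> x - d < u -> v < x + d ->
       Rabs (F v - F u - f x * (g v - g u)) <= ε * (g v - g u)) ->
  KInt f g a b (F b - F a).
Proof.
  intros Hab Hg Hloc eps Heps.
  set (e := eps / (2 * (g b - g a + 1))).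
  assert (Hgab : g a <= g b) by (apply Hg; lra).
  assert (He : 0 < e) by (apply Rdiv_lt_0_compat; lra).
  destruct (functional_choice (fun x d => 0 < d /\ (a <= x <= b ->
     forall u v, a <= u <= x -> x <= v <= b -> x - d < u -> v < x + d ->
       Rabs (F v - F u - f x * (g v - g u)) <= e * (g v - g u)))) as [δ Hδ].
  { intros x. destruct (classic (a <= x <= b)) as [Hx|Hx].
    - destruct (Hloc x Hx e He) as [d Hd]. exists d. split; [apply Hd|intros _; apply Hd].
    - exists 1. split; [lra|intros; contradiction]. }
  exists δ. split; [intros x _; apply Hδ|].
  intros m t τ Hf.
  assert (Htel : Rabs (F (t m) - F (t O) - rs_sum f g t τ m) <= e * (g (t m) - g (t O))).
  { apply rs_sum_telescope. intros j Hj.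
    pose proof Hf as (_ & _ & Hstep). destruct (Hstep j Hj) as (_ & Hτj & Hlo & Hhi & _).
    pose proof (fine_partition_range Hf (j - 1) ltac:(lia)).
    pose proof (fine_partition_range Hf j ltac:(lia)).
    apply Hδ; lra. }
  destruct Hf as (H0 & Hm & _). rewrite H0, Hm in Htel.
  assert (e * (g b - g a) < eps).
  { apply Rlt_le_trans with (e * (g b - g a + 1)); [apply Rmult_lt_compat_l; lra|].
    unfold e. replace (eps / (2 * (g b - g a + 1)) * (g b - g a + 1)) with (eps / 2)
      by (field; lra). lra. }
  lra.
Qed.

Lemma real_induction (P : R -> Prop) a b :
  (forall c, a <= c <= b -> (forall r, a <= r < c -> P r) -> P c) ->
  (forall c, a <= c < b -> (forall r, a <= r <= c -> P r) ->
     exists s, c < s /\ forall r, c < r < s -> P r) ->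
  forall r, a <= r <= b -> P r.
Proof.
  intros Hleft Hright r Hr.
  set (A x := a <= x <= b /\ forall r, a <= r <= x -> P r).
  assert (HA : A a).
  { split; [lra|]. intros r' Hr'. replace r' with a by lra.
    apply Hleft; [lra|]. intros; lra. }
  destruct (completeness A) as [s Hs].
  { exists b. intros x Hx. apply Hx. }
  { exists a. exact HA. }
  assert (Has : a <= s) by (apply (proj1 Hs); exact HA).
  assert (Hsb : s <= b) by (apply Hs; intros x Hx; apply Hx).
  assert (HAs : A s).
  { split; [lra|]. intros r' Hr'. destruct (Req_dec r' s) as [->|Hne].
    - apply Hleft; [lra|]. intros r'' Hr''.
      destruct (lub_approx A s Hs (s - r'')) as [x [[_ Hx] Hxr]]; [lra|].
      apply Hx. lra.
    - destruct (lub_approx A s Hs (s - r')) as [x [[_ Hx] Hxr]]; [lra|].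
      apply Hx. lra. }
  destruct (Req_dec s b) as [<-|Hne]; [apply HAs; lra|].
  exfalso. destruct (Hright s ltac:(lra) (proj2 HAs)) as [s' [Hss' Hs']].
  set (x := Rmin b ((s + s') / 2)).
  assert (Hsx : s < x) by (apply Rmin_glb_lt; lra).
  assert (Hxs' : x <= (s + s') / 2) by apply Rmin_r.
  assert (HAx : A x).
  { split; [split; [lra|apply Rmin_l]|]. intros r' Hr'.
    destruct (Rle_dec r' s); [apply HAs; lra|apply Hs'; lra]. }
  pose proof (proj1 Hs x HAx). lra.
Qed.

Section HomogeneousEquation.

Variables (T : R) (g w : R -> R).
Hypothesis Hg : nondecr_on T g.
Hypothesis Hw : forall s, 0 <= s <= T -> KInt w g 0 s (w s).

Lemma nondecr_on_sub a b : 0 <= a -> b <= T ->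
  forall x y, a <= x -> x <= y -> y <= b -> g x <= g y.
Proof. intros Ha Hb x y Hx Hxy Hy. apply Hg; lra. Qed.

(* Since the jump of [g] at [c] is at most 1/2, the last interval of a fine
   partition of [0, c] carries at most 3/4 of [w c]. *)
Lemma hom_solution_jump_bound c L : 0 < c <= T -> left_lim g c L -> g c - L <= 1 / 2 ->
  (forall r, 0 <= r < c -> w r = 0) ->
  forall ε, 0 < ε -> Rabs (w c) <= 3 / 4 * Rabs (w c) + ε.
Proof.
  intros Hc HL Hjump Hzero ε Hε.
  destruct (Hw c ltac:(lra) ε Hε) as [δ [Hδ K]].
  destruct (HL (1 / 4) ltac:(lra)) as [d [Hd HLd]].
  destruct (cousin (fun x => Rmin (δ x) d) 0 c) as (m & t & τ & Hf); [lra| |].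
  { intros x Hx. apply Rmin_glb_lt; auto. }
  specialize (K m t τ (fine_partition_gauge_le _ _ _ _ _ _ _ (fun x => Rmin_l _ _) Hf)).
  pose proof Hf as (H0 & Hm & Hstep).
  assert (Hm1 : (1 <= m)%nat) by (destruct m; [rewrite H0 in Hm; lra|lia]).
  assert (Hearly : forall j, (1 <= j < m)%nat -> w (τ j) = 0).
  { intros j Hj. apply Hzero.
    pose proof (fine_partition_tag Hf j ltac:(lia)).
    pose proof (fine_partition_lt Hf j m ltac:(lia)).
    destruct (Hstep j ltac:(lia)) as (_ & Hτ & _). lra. }
  destruct (Hstep m ltac:(lia)) as (_ & Hτm & Hlo & _).
  rewrite Hm in Hτm. cbv beta in Hlo.
  destruct (Req_dec (τ m) c) as [Hlast|Hlast].
  - assert (Hsum : Rabs (rs_sum w g t τ m) <= Rabs (w c) * (g c - g (t (m - 1)%nat))).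
    { pose proof (fine_partition_range Hf (m - 1) ltac:(lia)).
      apply (rs_sum_abs_le _ _ _ _ _ _ _ _ _ _ Hf (nondecr_on_sub 0 c ltac:(lra) ltac:(lra)));
        [lra|apply Rabs_pos| |].
      - intros j Hj. destruct (Nat.eq_dec j m) as [->|Hne]; [rewrite Hlast; lra|].
        rewrite Hearly by lia. rewrite Rabs_R0. apply Rabs_pos.
      - intros j Hj Hlt. apply Hearly. split; [lia|].
        destruct (Nat.eq_dec j m) as [->|Hne]; [lra|lia]. }
    assert (Hnear : Rabs (g (t (m - 1)%nat) - L) < 1 / 4).
    { apply HLd. pose proof (Rmin_r (δ (τ m)) d).
      pose proof (fine_partition_lt Hf (m - 1) m ltac:(lia)). lra. }
    apply Rabs_def2 in Hnear.
    assert (Rabs (w c) * (g c - g (t (m - 1)%nat)) <= Rabs (w c) * (3 / 4))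
      by (apply Rmult_le_compat_l; [apply Rabs_pos|lra]).
    replace (w c) with ((w c - rs_sum w g t τ m) + rs_sum w g t τ m) at 1 by ring.
    eapply Rle_trans; [apply Rabs_triang|]. lra.
  - rewrite rs_sum_eq0 in K.
    + rewrite Rminus_0_r in K. pose proof (Rabs_pos (w c)). lra.
    + intros j Hj. destruct (Nat.eq_dec j m) as [->|Hne]; [|apply Hearly; lia].
      apply Hzero. pose proof (fine_partition_tag Hf m ltac:(lia)). lra.
Qed.

Lemma hom_solution_zero_at c : 0 < c <= T ->
  (exists L, left_lim g c L /\ g c - L <= 1 / 2) ->
  (forall r, 0 <= r < c -> w r = 0) -> w c = 0.
Proof.
  intros Hc [L [HL Hjump]] Hzero. apply Rabs_le_0.
  apply Rle_plus_epsilon. intros ε Hε.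
  pose proof (hom_solution_jump_bound c L Hc HL Hjump Hzero (ε / 4) ltac:(lra)). lra.
Qed.

(* The gauge keeps the intervals tagged to the right of [c] away from [c]. *)
Lemma hom_solution_bound_right c s B : 0 <= c < s -> s <= T ->
  (forall r, 0 <= r <= c -> w r = 0) ->
  (forall r, 0 <= r <= s -> Rabs (w r) <= B) ->
  Rabs (w s) <= B * (g s - g c).
Proof.
  intros Hcs HsT Hzero Hbound.
  assert (HB : 0 <= B) by (eapply Rle_trans; [apply Rabs_pos|apply (Hbound 0); lra]).
  apply Rle_plus_epsilon. intros ε Hε.
  destruct (Hw s ltac:(lra) ε Hε) as [δ [Hδ K]].
  set (δ' x := if Rlt_dec c x then Rmin (δ x) (x - c) else δ x).
  assert (Hδ'le : forall x, δ' x <= δ x).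
  { intros x. unfold δ'. destruct (Rlt_dec c x); [apply Rmin_l|lra]. }
  destruct (cousin δ' 0 s) as (m & t & τ & Hf); [lra| |].
  { intros x Hx. unfold δ'. destruct (Rlt_dec c x); [apply Rmin_glb_lt; auto; lra|auto]. }
  specialize (K m t τ (fine_partition_gauge_le _ _ _ _ _ _ _ Hδ'le Hf)).
  assert (Hsum : Rabs (rs_sum w g t τ m) <= B * (g s - g c)).
  { apply (rs_sum_abs_le _ _ _ _ _ _ _ _ _ _ Hf (nondecr_on_sub 0 s ltac:(lra) HsT));
      [lra|exact HB| |].
    - intros j Hj. apply Hbound. apply (fine_partition_tag Hf j Hj).
    - intros j Hj Hlt. apply Hzero.
      pose proof (fine_partition_tag Hf j Hj).
      pose proof Hf as (_ & _ & Hstep). destruct (Hstep j Hj) as (_ & _ & Hlo & _).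
      split; [lra|]. apply Rnot_lt_le. intros Hcτ.
      unfold δ' in Hlo. destruct (Rlt_dec c (τ j)); [|lra].
      pose proof (Rmin_r (δ (τ j)) (τ j - c)). lra. }
  replace (w s) with ((w s - rs_sum w g t τ m) + rs_sum w g t τ m) by ring.
  eapply Rle_trans; [apply Rabs_triang|]. lra.
Qed.

(* Right continuity makes [g] increase by less than 1/2 just after [c], so
   every bound of [w] on [0, s1] can be halved: the least one is 0. *)
Lemma hom_solution_zero_right c : rcont_on T g -> 0 <= c < T ->
  (exists M, forall r, 0 <= r <= T -> Rabs (w r) <= M) ->
  (forall r, 0 <= r <= c -> w r = 0) ->
  exists s, c < s /\ forall r, c < r < s -> w r = 0.
Proof.
  intros Hr Hc [M HM] Hzero.
  destruct (Hr c Hc (1 / 2) ltac:(lra)) as [d [Hd Hgd]].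
  set (s1 := Rmin T (c + d / 2)).
  assert (Hcs1 : c < s1) by (apply Rmin_glb_lt; lra).
  assert (Hs1T : s1 <= T) by apply Rmin_l.
  assert (Hs1d : s1 <= c + d / 2) by apply Rmin_r.
  assert (Hhalf : forall B, (forall r, 0 <= r <= s1 -> Rabs (w r) <= B) ->
                  forall r, 0 <= r <= s1 -> Rabs (w r) <= B / 2).
  { intros B HB r Hr'.
    assert (HB0 : 0 <= B) by (eapply Rle_trans; [apply Rabs_pos|apply (HB 0); lra]).
    destruct (Rle_dec r c) as [Hrc|Hrc].
    - rewrite Hzero by lra. rewrite Rabs_R0. lra.
    - assert (Hgr : Rabs (g r - g c) < 1 / 2) by (apply Hgd; lra).
      apply Rabs_def2 in Hgr.
      assert (g c <= g r) by (apply Hg; lra).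
      eapply Rle_trans.
      + apply (hom_solution_bound_right c r B); try lra; auto.
        intros r' Hr''. apply HB. lra.
      + replace (B / 2) with (B * (1 / 2)) by field. apply Rmult_le_compat_l; lra. }
  set (E x := exists r, 0 <= r <= s1 /\ x = Rabs (w r)).
  destruct (completeness E) as [K HK].
  { exists M. intros x (r & Hr' & ->). apply HM. lra. }
  { exists (Rabs (w c)). exists c. split; [lra|reflexivity]. }
  assert (Hbound : forall r, 0 <= r <= s1 -> Rabs (w r) <= K).
  { intros r Hr'. apply (proj1 HK). exists r. split; [exact Hr'|reflexivity]. }
  assert (HK0 : K <= K / 2).
  { apply (proj2 HK). intros x (r & Hr' & ->). apply Hhalf; assumption. }
  exists s1. split; [exact Hcs1|]. intros r Hr'.
  apply Rabs_le_0. pose proof (Rabs_pos (w r)). pose proof (Hbound r ltac:(lra)). lra.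
Qed.

Lemma hom_solution_vanishes : rcont_on T g ->
  (forall t, 0 < t <= T -> exists L, left_lim g t L /\ g t - L <= 1 / 2) ->
  (exists M, forall r, 0 <= r <= T -> Rabs (w r) <= M) ->
  forall r, 0 <= r <= T -> w r = 0.
Proof.
  intros Hr Hj Hbd. apply real_induction.
  - intros c Hc Hbelow. destruct (Rle_lt_dec c 0) as [Hc0|Hc0].
    + replace c with 0 by lra. apply (KInt_degenerate w g 0). apply Hw. lra.
    + apply hom_solution_zero_at; [lra|apply Hj; lra|exact Hbelow].
  - intros c Hc Hupto. apply hom_solution_zero_right; auto.
Qed.

End HomogeneousEquation.

Lemma is_solution_bounded T g y : is_solution T g y ->
  forall r, 0 <= r <= T -> 1 <= y r <= y T.
Proof. intros (Hge1 & Hmono & _) r Hr. split; [apply Hge1; lra|apply Hmono; lra]. Qed.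

Lemma solution_unique T g y z :
  nondecr_on T g -> rcont_on T g ->
  (forall t, 0 < t <= T -> exists L, left_lim g t L /\ g t - L <= 1 / 2) ->
  is_solution T g y -> is_solution T g z -> forall t, 0 <= t <= T -> z t = y t.
Proof.
  intros Hg Hr Hj Hy Hz t Ht.
  enough (Hw : z t - y t = 0) by lra.
  apply (hom_solution_vanishes T g (fun x => z x - y x)); auto.
  - intros s Hs. destruct (proj2 (proj2 (proj2 Hz)) s Hs) as [Jz [Kz ->]].
    destruct (proj2 (proj2 (proj2 Hy)) s Hs) as [Jy [Ky ->]].
    replace (1 + Jz - (1 + Jy)) with (Jz - Jy) by ring. apply KInt_sub; assumption.
  - exists (z T + y T). intros r Hrange. apply Rabs_le.
    pose proof (is_solution_bounded T g y Hy r Hrange).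
    pose proof (is_solution_bounded T g z Hz r Hrange). lra.
Qed.

Definition jump_factor (a : R) : R := / (1 - a).

Lemma jump_factor_mul_1m a : a < 1 -> jump_factor a * (1 - a) = 1.
Proof. intros Ha. unfold jump_factor. field. lra. Qed.

Lemma jump_factor_pos a : a < 1 -> 0 < jump_factor a.
Proof. intros Ha. apply Rinv_0_lt_compat. lra. Qed.

Lemma jump_factor_ge a : a < 1 -> 1 + a <= jump_factor a.
Proof.
  intros Ha. pose proof (jump_factor_mul_1m a Ha).
  apply Rmult_le_reg_r with (1 - a); [lra|]. nra.
Qed.

Lemma jump_factor_le a b : a <= b -> b < 1 -> jump_factor a <= jump_factor b.
Proof. intros Hab Hb. apply Rinv_le_contravar; lra. Qed.

Lemma jump_factor_mul_le a b : 0 <= a -> 0 <= b -> a + b < 1 ->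
  jump_factor a * jump_factor b <= jump_factor (a + b).
Proof.
  intros Ha Hb Hab. unfold jump_factor. rewrite <- Rinv_mult. apply Rinv_le_contravar; nra.
Qed.

Lemma jump_factor_le_exp a : 0 <= a <= 2 / 3 -> jump_factor a <= exp (2 * a).
Proof.
  intros Ha.
  assert (Hexp : (1 + a / 2) ^ 4 <= exp (2 * a)).
  { replace (2 * a) with (a / 2 + a / 2 + a / 2 + a / 2) by field.
    rewrite !exp_plus. replace (exp (a / 2) * exp (a / 2) * exp (a / 2) * exp (a / 2))
      with (exp (a / 2) ^ 4) by ring.
    apply pow_incr. pose proof (exp_ineq1_le (a / 2)). lra. }
  assert (Hpoly : 1 <= (1 + a / 2) ^ 4 * (1 - a)).
  { assert (a ^ 2 <= 4 / 9) by nra. assert (a ^ 3 <= 8 / 27) by nra.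
    assert (a ^ 4 <= 16 / 81) by nra.
    replace ((1 + a / 2) ^ 4 * (1 - a))
      with (1 + a * (1 - a / 2 - a ^ 2 - 7 * a ^ 3 / 16 - a ^ 4 / 16)) by field.
    assert (0 <= a * (1 - a / 2 - a ^ 2 - 7 * a ^ 3 / 16 - a ^ 4 / 16))
      by (apply Rmult_le_pos; lra).
    lra. }
  pose proof (jump_factor_mul_1m a ltac:(lra)).
  apply Rmult_le_reg_r with (1 - a); [lra|]. nra.
Qed.

Lemma jump_factor_sandwich Q a e : 0 <= a <= 2 / 3 -> a <= e / 3 ->
  1 + a <= Q <= jump_factor a -> 0 <= Q - (1 + a) <= e * a.
Proof.
  intros Ha Hae HQ. pose proof (jump_factor_mul_1m a ltac:(lra)).
  assert (Hphi : jump_factor a - 1 - a = a * a * jump_factor a) by nra.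
  assert (jump_factor a <= 3) by (apply Rmult_le_reg_r with (1 - a); nra).
  assert (a * a * jump_factor a <= a * a * 3) by (apply Rmult_le_compat_l; nra).
  nra.
Qed.

(* [/ Q] lies above [1 - b] and below both [1 - Δ] and [1 - b + b^2], hence
   exceeds [1 - b] by at most [min (b - Δ) (b^2) <= e b]. *)
Lemma inv_jump_factor_sandwich Q b Δ e : 0 <= b < 1 -> Δ <= b -> b - Δ <= e * e -> 0 < e ->
  1 + b <= Q -> jump_factor Δ <= Q -> Q <= jump_factor b -> 0 <= / Q - (1 - b) <= e * b.
Proof.
  intros Hb HΔ Hη He HQ1 HQΔ HQb.
  pose proof (jump_factor_mul_1m b ltac:(lra)). pose proof (jump_factor_mul_1m Δ ltac:(lra)).
  assert (HQ : Q * / Q = 1) by (field; lra).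
  assert (R1 : 1 - b <= / Q) by (apply Rmult_le_reg_l with Q; nra).
  assert (R2 : / Q <= 1 - Δ) by (apply Rmult_le_reg_l with Q; nra).
  assert (R3 : / Q <= 1 - b + b * b) by (apply Rmult_le_reg_l with Q; nra).
  split; [lra|].
  destruct (Rle_dec b e); nra.
Qed.

Definition is_glb (E : R -> Prop) (m : R) : Prop :=
  (forall x, E x -> m <= x) /\ (forall m', (forall x, E x -> m' <= x) -> m' <= m).

Definition glb (E : R -> Prop) : R := epsilon (inhabits 0) (is_glb E).

Lemma glb_spec E : (exists x, E x) -> (exists l, forall x, E x -> l <= x) -> is_glb E (glb E).
Proof.
  intros [x0 Hx0] [l Hl]. unfold glb. apply epsilon_spec.
  destruct (completeness (fun x => E (- x))) as [s [Hub Hlub]].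
  { exists (- l). intros x Hx. specialize (Hl _ Hx). lra. }
  { exists (- x0). rewrite Ropp_involutive. exact Hx0. }
  exists (- s). split.
  - intros x Hx. enough (- x <= s) by lra. apply Hub. rewrite Ropp_involutive. exact Hx.
  - intros m' Hm'. enough (s <= - m') by lra.
    apply Hlub. intros x Hx. specialize (Hm' _ Hx). lra.
Qed.

Lemma is_glb_mul_le E1 E2 m1 m2 m : is_glb E1 m1 -> is_glb E2 m2 -> 0 < m1 ->
  (forall c, E2 c -> 0 < c) -> (forall c1 c2, E1 c1 -> E2 c2 -> m <= c1 * c2) ->
  m <= m1 * m2.
Proof.
  intros [_ Hglb1] [_ Hglb2] Hm1 Hpos Hprod.
  enough (Hdiv : m / m1 <= m2).
  { apply Rmult_le_reg_r with (/ m1); [apply Rinv_0_lt_compat; lra|].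
    replace (m1 * m2 * / m1) with m2 by (field; lra). exact Hdiv. }
  apply Hglb2. intros c2 Hc2. pose proof (Hpos c2 Hc2).
  assert (Hc : m / c2 <= m1).
  { apply Hglb1. intros c1 Hc1. apply Rmult_le_reg_r with c2; [lra|].
    replace (m / c2 * c2) with m by (field; lra). apply Hprod; assumption. }
  apply Rmult_le_reg_r with m1; [lra|].
  replace (m / m1 * m1) with m by (field; lra).
  apply Rmult_le_reg_r with (/ c2); [apply Rinv_0_lt_compat; lra|].
  replace (c2 * m1 * / c2) with m1 by (field; lra). exact Hc.
Qed.

Section ProductIntegral.

Variables (T : R) (g : R -> R).
Hypothesis Hg : nondecr_on T g.

(* The step bound 2/3 keeps every factor [jump_factor] at most 3. *)
Fixpoint chain (x : R) (l : list R) : Prop :=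
  match l with
  | nil => True
  | y :: l' => x <= y /\ y <= T /\ g y - g x <= 2 / 3 /\ chain y l'
  end.

Fixpoint chain_end (x : R) (l : list R) : R :=
  match l with nil => x | y :: l' => chain_end y l' end.

Fixpoint chain_prod (x : R) (l : list R) : R :=
  match l with nil => 1 | y :: l' => jump_factor (g y - g x) * chain_prod y l' end.

Lemma chain_end_bounds x l : x <= T -> chain x l -> x <= chain_end x l <= T.
Proof.
  revert x; induction l as [|y l IH]; intros x HxT Hc; simpl; [lra|].
  destruct Hc as (Hxy & HyT & _ & Hc). specialize (IH y HyT Hc). lra.
Qed.

Lemma chain_prod_ge x l : 0 <= x <= T -> chain x l ->
  1 + (g (chain_end x l) - g x) <= chain_prod x l.
Proof.
  revert x; induction l as [|y l IH]; intros x Hx Hc; simpl; [lra|].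
  destruct Hc as (Hxy & HyT & Hstep & Hc).
  specialize (IH y ltac:(lra) Hc).
  pose proof (chain_end_bounds y l HyT Hc).
  assert (g x <= g y) by (apply Hg; lra).
  assert (g y <= g (chain_end y l)) by (apply Hg; lra).
  pose proof (jump_factor_ge (g y - g x) ltac:(lra)).
  assert (0 <= (g y - g x) * (g (chain_end y l) - g y)) by (apply Rmult_le_pos; lra).
  nra.
Qed.

Lemma chain_prod_le_exp x l : 0 <= x <= T -> chain x l ->
  chain_prod x l <= exp (2 * (g (chain_end x l) - g x)).
Proof.
  revert x; induction l as [|y l IH]; intros x Hx Hc; simpl.
  - replace (2 * (g x - g x)) with 0 by ring. rewrite exp_0. lra.
  - destruct Hc as (Hxy & HyT & Hstep & Hc).
    specialize (IH y ltac:(lra) Hc).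
    pose proof (chain_prod_ge y l ltac:(lra) Hc).
    pose proof (chain_end_bounds y l HyT Hc).
    assert (g x <= g y) by (apply Hg; lra).
    assert (g y <= g (chain_end y l)) by (apply Hg; lra).
    replace (2 * (g (chain_end y l) - g x))
      with (2 * (g y - g x) + 2 * (g (chain_end y l) - g y)) by ring.
    rewrite exp_plus. apply Rmult_le_compat; try lra.
    + left. apply jump_factor_pos. lra.
    + apply jump_factor_le_exp. lra.
Qed.

Lemma chain_app x l1 l2 : chain x l1 -> chain (chain_end x l1) l2 -> chain x (l1 ++ l2).
Proof.
  revert x; induction l1 as [|y l1 IH]; intros x H1 H2; simpl in *; [exact H2|].
  destruct H1 as (A1 & A2 & A3 & A4). repeat split; auto.
Qed.

Lemma chain_end_app x l1 l2 : chain_end x (l1 ++ l2) = chain_end (chain_end x l1) l2.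
Proof. revert x; induction l1 as [|y l1 IH]; intros x; simpl; auto. Qed.

Lemma chain_prod_app x l1 l2 :
  chain_prod x (l1 ++ l2) = chain_prod x l1 * chain_prod (chain_end x l1) l2.
Proof. revert x; induction l1 as [|y l1 IH]; intros x; simpl; [ring|rewrite IH; ring]. Qed.

Lemma chain_split x l v : 0 <= x -> x <= v <= chain_end x l -> chain x l ->
  exists l1 l2, chain x l1 /\ chain_end x l1 = v /\ chain v l2 /\
    chain_end v l2 = chain_end x l /\ chain_prod x l1 * chain_prod v l2 <= chain_prod x l.
Proof.
  revert x; induction l as [|y l IH]; intros x Hx Hv Hc; simpl in Hv.
  - exists nil, nil. simpl. repeat split; lra.
  - destruct Hc as (Hxy & HyT & Hstep & Hc).
    pose proof (chain_end_bounds y l HyT Hc).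
    pose proof (chain_prod_ge y l ltac:(lra) Hc).
    assert (g y <= g (chain_end y l)) by (apply Hg; lra).
    destruct (Rle_dec v y) as [Hvy|Hvy].
    + assert (g x <= g v) by (apply Hg; lra).
      assert (g v <= g y) by (apply Hg; lra).
      exists (v :: nil), (y :: l). simpl.
      split; [repeat split; lra|split; [reflexivity|split; [repeat split; auto; lra|]]].
      split; [reflexivity|].
      pose proof (jump_factor_mul_le (g v - g x) (g y - g v) ltac:(lra) ltac:(lra) ltac:(lra)).
      replace (g v - g x + (g y - g v)) with (g y - g x) in * by ring.
      pose proof (jump_factor_pos (g v - g x) ltac:(lra)).
      pose proof (jump_factor_pos (g y - g v) ltac:(lra)).
      nra.
    + destruct (IH y ltac:(lra) ltac:(lra) Hc) as (l1 & l2 & B1 & B2 & B3 & B4 & B5).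
      exists (y :: l1), l2. simpl. repeat split; auto; try lra.
      pose proof (jump_factor_pos (g y - g x) ltac:(lra)).
      rewrite Rmult_assoc. apply Rmult_le_compat_l; lra.
Qed.

Lemma left_lim_ge τ L : left_lim g τ L -> 0 < τ <= T -> forall p, 0 <= p < τ -> g p <= L.
Proof.
  intros HL Hτ p Hp. apply Rnot_lt_le. intros Hlt.
  destruct (HL (g p - L) ltac:(lra)) as [d [Hd HLd]].
  set (s := Rmax p (τ - d / 2)).
  assert (p <= s) by apply Rmax_l. assert (τ - d / 2 <= s) by apply Rmax_r.
  assert (s < τ) by (apply Rmax_lub_lt; lra).
  specialize (HLd s ltac:(lra)). apply Rabs_def2 in HLd.
  assert (g p <= g s) by (apply Hg; lra). lra.
Qed.

(* The last factor of a chain ending at [τ] already sees the whole jump of [g] at [τ]. *)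
Lemma chain_prod_ge_jump x l τ L : 0 <= x < τ -> chain x l -> chain_end x l = τ ->
  left_lim g τ L -> jump_factor (g τ - L) <= chain_prod x l.
Proof.
  revert x; induction l as [|y l IH]; intros x Hx Hc Hend HL; simpl in *; [lra|].
  destruct Hc as (Hxy & HyT & Hstep & Hc).
  pose proof (chain_end_bounds y l HyT Hc).
  pose proof (chain_prod_ge y l ltac:(lra) Hc).
  assert (g y <= g (chain_end y l)) by (apply Hg; lra).
  assert (g x <= g y) by (apply Hg; lra).
  assert (HxL : g x <= L) by (apply (left_lim_ge τ L HL); lra).
  pose proof (jump_factor_ge (g y - g x) ltac:(lra)).
  destruct (Rlt_dec y τ) as [Hyτ|Hyτ].
  - specialize (IH y ltac:(lra) Hc Hend HL). nra.
  - assert (y = τ) by lra. subst y.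
    pose proof (jump_factor_le (g τ - L) (g τ - g x) ltac:(lra) ltac:(lra)). nra.
Qed.

Lemma chain_map_seq t k n :
  (forall j, (k < j <= k + n)%nat ->
     t (j - 1)%nat <= t j /\ t j <= T /\ g (t j) - g (t (j - 1)%nat) <= 2 / 3) ->
  chain (t k) (map t (seq (S k) n)) /\ chain_end (t k) (map t (seq (S k) n)) = t (k + n)%nat.
Proof.
  revert k; induction n as [|n IH]; intros k Hsteps; simpl.
  - rewrite Nat.add_0_r. auto.
  - destruct (IH (S k)) as [Hc Hend]; [intros j Hj; apply Hsteps; lia|].
    destruct (Hsteps (S k) ltac:(lia)) as (C1 & C2 & C3).
    replace (S k - 1)%nat with k in C1, C3 by lia.
    rewrite Hend. replace (S k + n)%nat with (k + S n)%nat by lia. auto.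
Qed.

Hypothesis Hr : rcont_on T g.
Hypothesis Hj : forall t, 0 < t <= T -> exists L, left_lim g t L /\ g t - L <= 1 / 2.

Lemma right_increment_small x e : 0 <= x <= T -> 0 < e ->
  exists d, 0 < d /\ forall q, x <= q <= T -> q < x + d -> g q - g x <= e.
Proof.
  intros Hx He. destruct (Rlt_dec x T) as [HxT|HxT].
  - destruct (Hr x ltac:(lra) e He) as [d [Hd Hrd]].
    exists d. split; [exact Hd|]. intros q Hq Hqd.
    specialize (Hrd q ltac:(lra) ltac:(lra)). apply Rabs_def2 in Hrd. lra.
  - exists 1. split; [lra|]. intros q Hq _. replace q with x by lra. lra.
Qed.

Lemma left_increment_small x e : 0 <= x <= T -> 0 < e ->
  exists d, 0 < d /\ forall p, 0 <= p <= x -> x - d < p -> g x - g p <= 1 / 2 + e.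
Proof.
  intros Hx He. destruct (Rlt_dec 0 x) as [Hx0|Hx0].
  - destruct (Hj x ltac:(lra)) as [L [HL Hjump]].
    destruct (HL e He) as [d [Hd HLd]].
    exists d. split; [exact Hd|]. intros p Hp Hpd.
    destruct (Req_dec p x) as [->|Hpx]; [lra|].
    specialize (HLd p ltac:(lra)). apply Rabs_def2 in HLd. lra.
  - exists 1. split; [lra|]. intros p Hp _. replace p with x by lra. lra.
Qed.

Lemma chain_exists u v : 0 <= u <= v -> v <= T -> exists l, chain u l /\ chain_end u l = v.
Proof.
  intros Huv HvT. destruct (Req_dec u v) as [<-|Hne]; [exists nil; simpl; auto|].
  destruct (functional_choice (fun x d => 0 < d /\ (0 <= x <= T ->
     forall p q, 0 <= p <= x -> x <= q <= T -> x - d < p -> q < x + d -> g q - g p <= 2 / 3)))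
    as [δ Hδ].
  { intros x. destruct (classic (0 <= x <= T)) as [Hx|Hx].
    - destruct (right_increment_small x (1 / 12) Hx ltac:(lra)) as [d1 [Hd1 Hright]].
      destruct (left_increment_small x (1 / 12) Hx ltac:(lra)) as [d2 [Hd2 Hleft]].
      exists (Rmin d1 d2). split; [apply Rmin_glb_lt; lra|]. intros _ p q Hp Hq Hpd Hqd.
      pose proof (Rmin_l d1 d2). pose proof (Rmin_r d1 d2).
      specialize (Hright q Hq ltac:(lra)). specialize (Hleft p Hp ltac:(lra)). lra.
    - exists 1. split; [lra|]. intros; contradiction. }
  destruct (cousin δ u v) as (m & t & τ & Hf); [lra|intros x _; apply Hδ|].
  pose proof Hf as (H0 & Hm & Hstep).
  destruct (chain_map_seq t O m) as [Hc Hend].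
  { intros j Hj'. destruct (Hstep j ltac:(lia)) as (A1 & A2 & A3 & A4 & _).
    pose proof (fine_partition_range Hf (j - 1) ltac:(lia)).
    pose proof (fine_partition_range Hf j ltac:(lia)).
    repeat split; try lra. apply (proj2 (Hδ (τ j))); lra. }
  rewrite H0 in Hc, Hend. exists (map t (seq 1 m)). split; [exact Hc|]. rewrite Hend. exact Hm.
Qed.

Definition chain_values (u v p : R) : Prop :=
  exists l, chain u l /\ chain_end u l = v /\ p = chain_prod u l.

Definition prod_int (u v : R) : R := glb (chain_values u v).

Lemma prod_int_spec u v : 0 <= u <= v -> v <= T -> is_glb (chain_values u v) (prod_int u v).
Proof.
  intros Huv HvT. apply glb_spec.
  - destruct (chain_exists u v Huv HvT) as [l [Hc Hend]]. exists (chain_prod u l), l. auto.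
  - exists 1. intros p (l & Hc & Hend & ->).
    pose proof (chain_prod_ge u l ltac:(lra) Hc) as Hge. rewrite Hend in Hge.
    assert (g u <= g v) by (apply Hg; lra). lra.
Qed.

Lemma prod_int_ge u v : 0 <= u <= v -> v <= T -> 1 + (g v - g u) <= prod_int u v.
Proof.
  intros Huv HvT. apply (proj2 (prod_int_spec u v Huv HvT)).
  intros p (l & Hc & Hend & ->). rewrite <- Hend. apply chain_prod_ge; [lra|exact Hc].
Qed.

Lemma prod_int_ge1 u v : 0 <= u <= v -> v <= T -> 1 <= prod_int u v.
Proof.
  intros Huv HvT. pose proof (prod_int_ge u v Huv HvT).
  assert (g u <= g v) by (apply Hg; lra). lra.
Qed.

Lemma prod_int_le_chain u l : 0 <= u <= T -> chain u l ->
  prod_int u (chain_end u l) <= chain_prod u l.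
Proof.
  intros Hu Hc. pose proof (chain_end_bounds u l ltac:(lra) Hc).
  apply (proj1 (prod_int_spec u (chain_end u l) ltac:(lra) ltac:(lra))). exists l. auto.
Qed.

Lemma prod_int_le_jump_factor u v : 0 <= u <= v -> v <= T -> g v - g u <= 2 / 3 ->
  prod_int u v <= jump_factor (g v - g u).
Proof.
  intros Huv HvT Hstep.
  assert (Hc : chain u (v :: nil)) by (simpl; repeat split; lra).
  pose proof (prod_int_le_chain u (v :: nil) ltac:(lra) Hc) as Hle. simpl in Hle. lra.
Qed.

Lemma prod_int_refl u : 0 <= u <= T -> prod_int u u = 1.
Proof.
  intros Hu. apply Rle_antisym; [|apply prod_int_ge1; lra].
  pose proof (prod_int_le_jump_factor u u ltac:(lra) ltac:(lra) ltac:(lra)) as Hle.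
  replace (g u - g u) with 0 in Hle by ring. unfold jump_factor in Hle.
  rewrite Rminus_0_r, Rinv_1 in Hle. exact Hle.
Qed.

Lemma prod_int_mul u v w : 0 <= u <= v -> v <= w -> w <= T ->
  prod_int u w = prod_int u v * prod_int v w.
Proof.
  intros Huv Hvw HwT.
  pose proof (prod_int_spec u v Huv ltac:(lra)) as Huv_glb.
  pose proof (prod_int_spec v w ltac:(lra) HwT) as Hvw_glb.
  pose proof (prod_int_spec u w ltac:(lra) HwT) as Huw_glb.
  apply Rle_antisym.
  - apply (is_glb_mul_le (chain_values u v) (chain_values v w)); auto.
    + pose proof (prod_int_ge1 u v Huv ltac:(lra)). lra.
    + intros c (l & Hc & Hend & ->).
      pose proof (chain_prod_ge v l ltac:(lra) Hc) as Hge. rewrite Hend in Hge.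
      assert (g v <= g w) by (apply Hg; lra). lra.
    + intros c1 c2 (l1 & Hc1 & Hend1 & ->) (l2 & Hc2 & Hend2 & ->).
      rewrite <- Hend1 in Hc2, Hend2 |- *. rewrite <- chain_prod_app.
      apply (proj1 Huw_glb). exists (l1 ++ l2).
      split; [apply chain_app; assumption|split; [rewrite chain_end_app; assumption|reflexivity]].
  - apply (proj2 Huw_glb). intros c (l & Hc & Hend & ->).
    destruct (chain_split u l v ltac:(lra) ltac:(lra) Hc) as (l1 & l2 & C1 & C2 & C3 & C4 & C5).
    assert (prod_int u v <= chain_prod u l1) by (apply (proj1 Huv_glb); exists l1; auto).
    assert (prod_int v w <= chain_prod v l2)
      by (apply (proj1 Hvw_glb); exists l2; repeat split; auto; congruence).
    pose proof (prod_int_ge1 u v Huv ltac:(lra)). pose proof (prod_int_ge1 v w ltac:(lra) HwT).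
    eapply Rle_trans; [|exact C5]. apply Rmult_le_compat; lra.
Qed.

Lemma prod_int_ge_jump u τ L : 0 <= u < τ -> τ <= T -> left_lim g τ L ->
  jump_factor (g τ - L) <= prod_int u τ.
Proof.
  intros Hu HτT HL. apply (proj2 (prod_int_spec u τ ltac:(lra) HτT)).
  intros p (l & Hc & Hend & ->). apply (chain_prod_ge_jump u l τ L); assumption.
Qed.

Lemma prod_int_right_local τ : 0 <= τ <= T -> forall ε, 0 < ε -> exists d, 0 < d /\
  forall v, τ <= v <= T -> v < τ + d ->
    Rabs (prod_int 0 v - prod_int 0 τ - prod_int 0 τ * (g v - g τ)) <= ε * (g v - g τ).
Proof.
  intros Hτ ε Hε. set (y := prod_int 0 τ).
  assert (Hy : 1 <= y) by (apply prod_int_ge1; lra).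
  set (e := ε / y).
  assert (He : 0 < e) by (apply Rdiv_lt_0_compat; lra).
  destruct (right_increment_small τ (Rmin (e / 3) (2 / 3)) Hτ) as [d [Hd Hsmall]].
  { apply Rmin_glb_lt; lra. }
  exists d. split; [exact Hd|]. intros v Hv Hvd.
  specialize (Hsmall v Hv Hvd).
  pose proof (Rmin_l (e / 3) (2 / 3)). pose proof (Rmin_r (e / 3) (2 / 3)).
  assert (g τ <= g v) by (apply Hg; lra).
  rewrite (prod_int_mul 0 τ v) by lra. fold y.
  set (Q := prod_int τ v).
  assert (HQ : 1 + (g v - g τ) <= Q <= jump_factor (g v - g τ)).
  { split; [apply prod_int_ge; lra|apply prod_int_le_jump_factor; lra]. }
  destruct (jump_factor_sandwich Q (g v - g τ) e ltac:(lra) ltac:(lra) HQ) as [Hlo Hhi].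
  replace (y * Q - y - y * (g v - g τ)) with (y * (Q - (1 + (g v - g τ)))) by ring.
  rewrite Rabs_right by (apply Rle_ge, Rmult_le_pos; lra).
  replace (ε * (g v - g τ)) with (y * (e * (g v - g τ))) by (unfold e; field; lra).
  apply Rmult_le_compat_l; lra.
Qed.

(* Approaching [τ] from the left, [g τ - g u] splits into the jump at [τ]
   and an arbitrarily small remainder [L - g u]; capping the latter by 1/6
   keeps [g τ - g u <= 2/3]. *)
Lemma prod_int_left_local τ : 0 <= τ <= T -> forall ε, 0 < ε -> exists d, 0 < d /\
  forall u, 0 <= u <= τ -> τ - d < u ->
    Rabs (prod_int 0 τ - prod_int 0 u - prod_int 0 τ * (g τ - g u)) <= ε * (g τ - g u).
Proof.
  intros Hτ ε Hε. set (y := prod_int 0 τ).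
  assert (Htriv : forall u, u = τ ->
            Rabs (y - prod_int 0 u - y * (g τ - g u)) <= ε * (g τ - g u)).
  { intros u ->. fold y. replace (y - y - y * (g τ - g τ)) with 0 by ring.
    rewrite Rabs_R0. lra. }
  destruct (Rlt_dec 0 τ) as [Hτ0|Hτ0].
  2:{ exists 1. split; [lra|]. intros u Hu _. apply Htriv. lra. }
  assert (Hy : 1 <= y) by (apply prod_int_ge1; lra).
  set (e := ε / y).
  assert (He : 0 < e) by (apply Rdiv_lt_0_compat; lra).
  destruct (Hj τ ltac:(lra)) as [L [HL Hjump]].
  destruct (HL (Rmin (e * e) (1 / 6))) as [d [Hd HLd]]; [apply Rmin_glb_lt; nra|].
  exists d. split; [exact Hd|]. intros u Hu Hud.
  destruct (Req_dec u τ) as [Huτ|Huτ]; [apply Htriv; exact Huτ|].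
  specialize (HLd u ltac:(lra)). apply Rabs_def2 in HLd.
  pose proof (Rmin_l (e * e) (1 / 6)). pose proof (Rmin_r (e * e) (1 / 6)).
  pose proof (left_lim_ge τ L HL ltac:(lra) u ltac:(lra)).
  assert (g u <= g τ) by (apply Hg; lra).
  set (Q := prod_int u τ).
  assert (HQ1 : 1 + (g τ - g u) <= Q) by (apply prod_int_ge; lra).
  assert (HQΔ : jump_factor (g τ - L) <= Q) by (apply prod_int_ge_jump; auto; lra).
  assert (HQb : Q <= jump_factor (g τ - g u)) by (apply prod_int_le_jump_factor; lra).
  destruct (inv_jump_factor_sandwich Q (g τ - g u) (g τ - L) e) as [Hlo Hhi]; try lra.
  assert (Hsplit : y = prod_int 0 u * Q) by (apply prod_int_mul; lra).
  replace (prod_int 0 u) with (y * / Q) by (rewrite Hsplit; field; lra).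
  replace (y - y * / Q - y * (g τ - g u)) with (- (y * (/ Q - (1 - (g τ - g u))))) by ring.
  rewrite Rabs_Ropp, Rabs_right by (apply Rle_ge, Rmult_le_pos; lra).
  replace (ε * (g τ - g u)) with (y * (e * (g τ - g u))) by (unfold e; field; lra).
  apply Rmult_le_compat_l; lra.
Qed.

Lemma prod_int_local t : t <= T -> forall x, 0 <= x <= t -> forall ε, 0 < ε -> exists d, 0 < d /\
  forall u v, 0 <= u <= x -> x <= v <= t -> x - d < u -> v < x + d ->
    Rabs (prod_int 0 v - prod_int 0 u - prod_int 0 x * (g v - g u)) <= ε * (g v - g u).
Proof.
  intros HtT x Hx ε Hε.
  destruct (prod_int_right_local x ltac:(lra) (ε / 2) ltac:(lra)) as [d1 [Hd1 Hright]].
  destruct (prod_int_left_local x ltac:(lra) (ε / 2) ltac:(lra)) as [d2 [Hd2 Hleft]].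
  exists (Rmin d1 d2). split; [apply Rmin_glb_lt; lra|].
  intros u v Hu Hv Hud Hvd.
  pose proof (Rmin_l d1 d2). pose proof (Rmin_r d1 d2).
  specialize (Hright v ltac:(lra) ltac:(lra)). specialize (Hleft u Hu ltac:(lra)).
  assert (g x <= g v) by (apply Hg; lra). assert (g u <= g x) by (apply Hg; lra).
  replace (prod_int 0 v - prod_int 0 u - prod_int 0 x * (g v - g u))
    with ((prod_int 0 v - prod_int 0 x - prod_int 0 x * (g v - g x))
          + (prod_int 0 x - prod_int 0 u - prod_int 0 x * (g x - g u))) by ring.
  eapply Rle_trans; [apply Rabs_triang|]. nra.
Qed.

Lemma prod_int_rcont : rcont_on T (prod_int 0).
Proof.
  intros t Ht eps Heps.
  set (y := prod_int 0 t).
  assert (Hy : 1 <= y) by (apply prod_int_ge1; lra).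
  destruct (prod_int_right_local t ltac:(lra) 1 ltac:(lra)) as [d1 [Hd1 Hloc]]. fold y in Hloc.
  destruct (right_increment_small t (eps / (2 * (1 + y))) ltac:(lra)) as [d2 [Hd2 Hsmall]].
  { apply Rdiv_lt_0_compat; lra. }
  exists (Rmin d1 d2). split; [apply Rmin_glb_lt; lra|]. intros s Hs HsT.
  pose proof (Rmin_l d1 d2). pose proof (Rmin_r d1 d2).
  specialize (Hloc s ltac:(lra) ltac:(lra)). specialize (Hsmall s ltac:(lra) ltac:(lra)).
  assert (g t <= g s) by (apply Hg; lra).
  assert (Hinc : Rabs (prod_int 0 s - y) <= (1 + y) * (g s - g t)).
  { replace (prod_int 0 s - y)
      with ((prod_int 0 s - y - y * (g s - g t)) + y * (g s - g t)) by ring.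
    eapply Rle_trans; [apply Rabs_triang|].
    rewrite (Rabs_right (y * _)) by (apply Rle_ge, Rmult_le_pos; lra). lra. }
  assert (Hbound : (1 + y) * (g s - g t) <= (1 + y) * (eps / (2 * (1 + y))))
    by (apply Rmult_le_compat_l; lra).
  replace ((1 + y) * (eps / (2 * (1 + y)))) with (eps / 2) in Hbound by (field; lra).
  lra.
Qed.

Lemma prod_int_is_solution : is_solution T g (prod_int 0).
Proof.
  split; [|split; [|split]].
  - intros t Ht. apply prod_int_ge1; lra.
  - intros s t Hs Hst HtT. rewrite (prod_int_mul 0 s t) by lra.
    pose proof (prod_int_ge1 0 s ltac:(lra) ltac:(lra)).
    pose proof (prod_int_ge1 s t ltac:(lra) HtT). nra.
  - exact prod_int_rcont.
  - intros t Ht. exists (prod_int 0 t - prod_int 0 0).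
    split; [|rewrite prod_int_refl by lra; ring].
    apply KInt_of_local_increments; [lra| |].
    + intros u v Hu Huv Hv. apply Hg; lra.
    + apply prod_int_local. lra.
Qed.

Lemma prod_int_le_exp t : 0 <= t <= T -> prod_int 0 t <= exp (2 * (g T - g 0)).
Proof.
  intros Ht.
  destruct (chain_exists 0 T ltac:(lra) ltac:(lra)) as [l [Hc Hend]].
  apply Rle_trans with (prod_int 0 T).
  - apply (proj1 (proj2 prod_int_is_solution)); lra.
  - rewrite <- Hend. eapply Rle_trans; [apply prod_int_le_chain; [lra|exact Hc]|].
    apply chain_prod_le_exp; [lra|exact Hc].
Qed.

End ProductIntegral.

Theorem lemmaA10 (T : R) (g : R -> R) :
  0 < T ->
  nondecr_on T g ->
  rcont_on T g ->
  (forall t, 0 < t <= T -> exists L, left_lim g t L /\ g t - L <= 1 / 2) ->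
  exists y : R -> R,
    is_solution T g y /\
    (forall z : R -> R, is_solution T g z -> forall t, 0 <= t <= T -> z t = y t) /\
    (forall t, 0 <= t <= T -> y t <= exp (2 * (g T - g 0))).
Proof.
  intros _ Hg Hr Hj.
  pose proof (prod_int_is_solution T g Hg Hr Hj) as Hsol.
  exists (prod_int T g 0). split; [exact Hsol|split].
  - intros z Hz. exact (solution_unique T g _ z Hg Hr Hj Hsol Hz).
  - exact (prod_int_le_exp T g Hg Hr Hj).
Qed.
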